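(* Let $T$ be a finite rooted tree in which every inner node has at least two children, with node set $V$ and leaf set $L$. There exists a partition of $V\setminus L$ into four (possibly empty) sets each of which is thin.
   Context: A set $X\subseteq V\setminus L$ of inner nodes is thin if for every $x\in X$ other than the root, the parent of $x$ does not belong to $X$, and $x$ has at least one sibling (possibly a leaf) that does not belong to $X$. *)

From mathcomp Require Import all_boot.
Set Implicit Arguments. Unset Strict Implicit. Unset Printing Implicit Defensive.

(* A finite rooted tree on the node type V (a finType), given by its root r
   and a parent function; by convention parent r = r. *)
Definition rooted_tree (V : finType) (r : V) (parent : V -> V) : Prop :=
  parent r = r /\ forall x : V, exists n : nat, iter n parent x = r.

Definition children (V : finType) (r : V) (parent : V -> V) (x : V) : {set V} :=
  [set y | (y != r) && (parent y == x)].

Definition inner_nodes (V : finType) (r : V) (parent : V -> V) : {set V} :=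
  [set x | children r parent x != set0].

Definition full_branching (V : finType) (r : V) (parent : V -> V) : Prop :=
  forall x : V, x \in inner_nodes r parent -> 1 < #|children r parent x|.

Definition thin (V : finType) (r : V) (parent : V -> V) (X : {set V}) : Prop :=
  X \subset inner_nodes r parent /\
  forall x : V, x \in X -> x != r ->
    parent x \notin X /\
    exists y : V, [/\ y \in children r parent (parent x), y != x & y \notin X].

From mathcomp Require Import all_boot.

Set Implicit Arguments.
Unset Strict Implicit.
Unset Printing Implicit Defensive.

(* Colour an inner node by the parity of its depth and by whether it is a
   designated "first" child of its parent.  A parent has the other parity, so
   it never shares the colour of its child; and among the (at least two)
   children of a node exactly one is first, so every non-root node has a
   sibling whose first-child bit, hence whose colour, differs from its own. *)

Section Fibers.

Variables (V C : finType) (key : V -> C) (S : {set V}).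

Definition fiber (c : C) : {set V} := [set x in S | key x == c].

Lemma fiberP x c : reflect (x \in S /\ key x = c) (x \in fiber c).
Proof. by rewrite inE; apply: (iffP andP) => -[-> /eqP]. Qed.

Lemma disjoint_fibers c c' : c != c' -> [disjoint fiber c & fiber c'].
Proof.
move=> neq_cc'; rewrite -setI_eq0; apply/eqP/setP => x; rewrite !inE.
apply/negP => /andP[/andP[_ /eqP kc] /andP[_ /eqP kc']].
by rewrite -kc -kc' eqxx in neq_cc'.
Qed.

Lemma bigcup_fibers : \bigcup_(c : C) fiber c = S.
Proof.
apply/setP => x; apply/bigcupP/idP => [[c _ /fiberP[]] //|xS].
by exists (key x); last by apply/fiberP.
Qed.

End Fibers.

Section ThinColouring.

Variables (V : finType) (r : V) (parent : V -> V).

Local Notation children := (children r parent).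
Local Notation inner := (inner_nodes r parent).

Lemma child_parent x : x != r -> x \in children (parent x).
Proof. by move=> xr; rewrite inE xr eqxx. Qed.

Lemma thin_fiber (C : finType) (key : V -> C) :
    (forall x, x != r ->
       key (parent x) != key x /\
       exists2 y, y \in children (parent x) & y != x /\ key y != key x) ->
  forall c, thin r parent (fiber key inner c).
Proof.
move=> key_sep c; split; first by apply/subsetP => x /fiberP[].
move=> x /fiberP[_ <-] xr; have [kpx [y yc [yx ky]]] := key_sep x xr.
split; first by move: kpx; apply: contra => /fiberP[_ ->].
by exists y; split => //; move: ky; apply: contra => /fiberP[_ ->].
Qed.

Hypothesis tree : rooted_tree r parent.
Hypothesis branching : full_branching r parent.

Lemma reaches_root x : exists n, iter n parent x == r.
Proof. by have [n xn] := tree.2 x; exists n; apply/eqP. Qed.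

Definition depth x := ex_minn (reaches_root x).

Lemma depth_parent x : x != r -> depth x = (depth (parent x)).+1.
Proof.
rewrite /depth => xr; case: ex_minnP => n /eqP xn min_n.
case: ex_minnP => m /eqP pxm min_m.
case: n xn min_n => [xr'|n xn min_n]; first by rewrite -xr' eqxx in xr.
apply/eqP; rewrite eqn_leq min_n ?iterSr ?pxm //=.
by rewrite ltnS min_m // -iterSr xn.
Qed.

Lemma exists_sibling x : x != r -> exists2 y, y \in children (parent x) & y != x.
Proof.
move=> xr; have xc := child_parent xr.
have /card_gt1P[y [z [yc zc yz]]] : 1 < #|children (parent x)|.
  by apply: branching; rewrite inE; apply/set0Pn; exists x.
by have [yx | ] := eqVneq y x; [exists z; rewrite // -yx eq_sym | exists y].
Qed.

(* The default [p] is a junk value; [first_child p] only matters when [p] has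
   a child. *)
Definition first_child p := odflt p [pick y in children p].

Definition is_first_child x := first_child (parent x) == x.

Lemma first_child_in p x : x \in children p -> first_child p \in children p.
Proof. by rewrite /first_child; case: pickP => [y ->|/(_ x) ->]. Qed.

Lemma sibling_first_child_neq x :
  x != r -> exists2 y, y \in children (parent x) &
    y != x /\ is_first_child y != is_first_child x.
Proof.
move=> xr; have xc := child_parent xr.
have parent_sibling y : y \in children (parent x) -> parent y = parent x.
  by rewrite inE => /andP[_ /eqP].
rewrite /is_first_child; have [first_x | not_first_x] := eqVneq _ x.
  have [y yc yx] := exists_sibling xr.
  by exists y; rewrite // parent_sibling // first_x [x == _]eq_sym (negbTE yx).
have fc := first_child_in xc; exists (first_child (parent x)) => //.
by rewrite parent_sibling // eqxx.
Qed.

Definition colour x := (odd (depth x), is_first_child x).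

Lemma colour_separates x :
  x != r ->
  colour (parent x) != colour x /\
  exists2 y, y \in children (parent x) & y != x /\ colour y != colour x.
Proof.
move=> xr; split.
  by rewrite xpair_eqE (depth_parent xr) /=; case: odd.
have [y yc [yx fy]] := sibling_first_child_neq xr.
by exists y => //; split => //; rewrite xpair_eqE negb_and fy orbT.
Qed.

End ThinColouring.

Definition code4 (c : bool * bool) : 'I_4 := inord (c.1 + 2 * c.2).

Lemma code4_inj : injective code4.
Proof. by move=> [[] []] [[] []] // /(congr1 val); rewrite /= !inordK. Qed.

Theorem lemma3p9 (V : finType) (r : V) (parent : V -> V) :
  rooted_tree r parent ->
  full_branching r parent ->
  exists A : 'I_4 -> {set V},
    [/\ (forall i j : 'I_4, i != j -> [disjoint A i & A j]),
        \bigcup_(i < 4) A i = inner_nodes r parent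
      & forall i : 'I_4, thin r parent (A i)].
Proof.
move=> tree branching; pose key x := code4 (colour tree x).
exists (fiber key (inner_nodes r parent)); split.
- exact: disjoint_fibers.
- exact: bigcup_fibers.
apply: thin_fiber => x xr; rewrite /key (inj_eq code4_inj).
have [sep_parent [y yc [yx sep_sibling]]] := colour_separates tree branching xr.
by split=> //; exists y; rewrite // (inj_eq code4_inj).
Qed.
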